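(* (a) For every sequence $C=(C(n):n\in\omega)$ of finite sets and every infinite $Y\subseteq\omega$, there is an infinite $X\subseteq Y$ such that $C$ admits a nice dissection over $X$. (b) Let $K$ be a compactification of a discrete space $D$, and let $D\subseteq X\subseteq K$ be such that every sequence of pairwise disjoint finite nonempty subsets of $D$ has an accumulation point in $\operatorname{CL}(X)$. Then $\operatorname{CL}(X)$ is pseudocompact.
   Context: Given a sequence $C=(C(n):n\in\omega)$ of finite sets and an infinite $X\subseteq\omega$, a nice dissection of $C$ over $X$ is a pair $(U,D)$ of sequences of sets indexed by $\omega$ such that $(U(n):n\in X)$ is increasing (i.e. $U(n)\subseteq U(m)$ for $n<m$ in $X$), the sets $D(n)$, $n\in X$, are pairwise disjoint, and for every $n\in X$, $U(n)\cap D(n)=\emptyset$ and $C(n)=U(n)\cup D(n)$. $\operatorname{CL}(X)$ is the set of nonempty closed subsets of $X$ with the Vietoris topology (generated by $A^+=\{F:F\subseteq A\}$, $A^-=\{F:F\cap A\ne\emptyset\}$, $A$ open); finite nonempty subsets of $D$ are regarded as points of $\operatorname{CL}(X)$. Pseudocompact means every continuous real-valued function is bounded. *)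

From mathcomp Require Import all_boot all_order all_algebra.
From mathcomp Require Import all_classical all_reals all_analysis.
Set Implicit Arguments. Unset Strict Implicit. Unset Printing Implicit Defensive.
Import Order.TTheory GRing.Theory Num.Theory numFieldNormedType.Exports.
Local Open Scope classical_set_scope.
Local Open Scope ring_scope.

Definition nice_dissection (T : Type) (C : nat -> set T) (X : set nat)
    (U Dd : nat -> set T) : Prop :=
  [/\ (forall n m, X n -> X m -> (n < m)%N -> U n `<=` U m),
      (forall n m, X n -> X m -> n <> m -> Dd n `&` Dd m = set0) &
      (forall n, X n -> U n `&` Dd n = set0 /\ C n = U n `|` Dd n)].

Definition compactification_of_discrete (K : topologicalType) (D : set K) : Prop :=
  [/\ hausdorff_space K, compact [set: K], dense D &
      (forall d, D d -> exists V : set K, open V /\ V `&` D = [set d])].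

Definition relopen (K : topologicalType) (X A : set K) : Prop :=
  exists V : set K, open V /\ A = V `&` X.

Definition CL (K : topologicalType) (X : set K) (F : set K) : Prop :=
  [/\ F `<=` X, F !=set0 & F = closure F `&` X].

(** Subbasic Vietoris sets: (true, A) encodes A^+, (false, A) encodes A^-. *)
Definition vsub (K : topologicalType) (X : set K) (p : bool * set K) : set (set K) :=
  if p.1 then [set F | CL X F /\ F `<=` p.2]
  else [set F | CL X F /\ F `&` p.2 !=set0].

Definition vbasic (K : topologicalType) (X : set K) (s : seq (bool * set K))
  : set (set K) :=
  [set F | CL X F /\ forall p, p \in s -> vsub X p F].

Definition vietoris_open (K : topologicalType) (X : set K) (W : set (set K)) : Prop :=
  W `<=` CL X /\
  forall F, W F -> exists s : seq (bool * set K),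
    [/\ (forall p, p \in s -> relopen X p.2), vbasic X s F & vbasic X s `<=` W].

Definition vietoris_acc_point (K : topologicalType) (X : set K)
    (S : nat -> set K) (G : set K) : Prop :=
  CL X G /\ forall W, vietoris_open X W -> W G ->
    forall m, exists2 n, (m <= n)%N & W (S n).

Definition vietoris_continuous (K : topologicalType) (X : set K) (R : realType)
    (f : set K -> R) : Prop :=
  forall O : set R, open O -> vietoris_open X [set F | CL X F /\ O (f F)].

Definition CL_pseudocompact (K : topologicalType) (X : set K) : Prop :=
  forall (R : realType) (f : set K -> R), vietoris_continuous X f ->
    exists M : R, forall F, CL X F -> `|f F| <= M.

(* (a) As C(x) is finite, the traces C(n) `&` C(x) take finitely many values, so
   by pigeonhole an infinite set of indices can be thinned to one on which this
   trace is constant.  Diagonalizing gives an infinite X in Y such that for n in X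
   the trace C(m) `&` C(n) is the same for all m > n in X.  Then the points of C(n)
   lying in every later C(m) form an increasing U(n), and the remainders
   C(n) `\` U(n) are pairwise disjoint.
   (b) If f were continuous and unbounded on CL(X), continuity and density of D
   would give finite S_n in D with |f S_n| > n.  Dissect (S_n) along an infinite
   I by (a).  The disjoint remainders either accumulate at some G, or are
   frequently empty and we take G empty.  As the U(n) increase, the trace on X
   of the closure of G and all the U(n) is an accumulation point of
   (S_n)_(n in I), and f cannot be continuous there. *)

From mathcomp Require Import all_boot all_order all_algebra.
From mathcomp Require Import all_classical all_reals all_analysis.
From mathcomp Require Import lra.
Set Implicit Arguments. Unset Strict Implicit. Unset Printing Implicit Defensive.
Import Order.TTheory GRing.Theory Num.Theory numFieldNormedType.Exports.
Local Open Scope classical_set_scope.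

Lemma cofinite_ge (m : nat) : cofinite_set [set n | (m <= n)%N].
Proof. by apply: sub_finite_set (finite_II m) => n /=; rewrite ltnNge => /negP. Qed.

Lemma infinite_set_ge (Y : set nat) (m : nat) :
  infinite_set Y -> exists2 n, (m <= n)%N & Y n.
Proof.
by move=> /infinite_setIl /(_ (cofinite_ge m)) /infinite_setN0[n [Yn mn]]; exists n.
Qed.

Lemma infinite_set_fiber (I : Type) (V : finType) (f : I -> V) (Y : set I) :
  infinite_set Y -> exists v, infinite_set (Y `&` f @^-1` [set v]).
Proof.
move=> Yoo; apply: contrapT => /forallNP fibers; apply: Yoo.
apply: (sub_finite_set _ (bigcup_finite (@finite_finset _ [set: V])
  (F := fun v => Y `&` f @^-1` [set v]) _)).
  by move=> y Yy; exists (f y).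
by move=> v _; apply: contrapT; exact: fibers.
Qed.

Lemma infinite_set_incr_enum (J : set nat) : infinite_set J ->
  exists e : nat -> nat, (forall k, (e k < e k.+1)%N) /\ (forall k, J (e k)).
Proof.
move=> Joo; have /choice[next nextP] : forall m, exists n, (m < n)%N /\ J n.
  by move=> m; have [n] := infinite_set_ge m.+1 Joo; exists n.
exists (fun k => iter k.+1 next 0%N).
by split=> k; [exact: (nextP _).1|exact: (nextP _).2].
Qed.

Lemma infinite_range_inj (T : Type) (f : nat -> T) :
  injective f -> infinite_set (range f).
Proof.
move=> finj /(finite_preimage (in2W finj)).
by rewrite preimage_range; exact: infinite_nat.
Qed.

Section StrictlyIncreasing.
Variables (e : nat -> nat) (e_incr : forall k, (e k < e k.+1)%N).

Lemma incr_leq_mono : {mono e : j k / (j <= k)%N}.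
Proof. exact/leq_mono/(homo_ltn ltn_trans). Qed.

Lemma incr_ltn_mono : {mono e : j k / (j < k)%N}.
Proof. by move=> j k; rewrite !ltnNge incr_leq_mono. Qed.

Lemma incr_inj : injective e.
Proof. exact/incn_inj/incr_leq_mono. Qed.

Lemma incr_ge_id k : (k <= e k)%N.
Proof. by elim: k => // k IH; exact: leq_ltn_trans IH (e_incr k). Qed.

End StrictlyIncreasing.

Section NiceDissection.
Variables (T : Type) (C : nat -> set T).

Lemma nice_dissection_of_stable_traces (X : set nat) :
  (forall n m m', X n -> X m -> X m' -> (n < m)%N -> (n < m')%N ->
     C m `&` C n = C m' `&` C n) ->
  exists U D, nice_dissection C X U D.
Proof.
move=> stable.
pose U n := [set y | C n y /\ forall m, X m -> (n < m)%N -> C m y].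
have UC n : U n `<=` C n by move=> y [].
exists U, (fun n => C n `\` U n); split.
- move=> n m Xn Xm nm y [_ Uy]; split; first exact: Uy.
  by move=> k Xk mk; apply: Uy => //; exact: ltn_trans mk.
- have disj n m : X n -> X m -> (n < m)%N ->
      (C n `\` U n) `&` (C m `\` U m) = set0.
    move=> Xn Xm nm; rewrite -subset0 => y [[Cny nUny] [Cmy _]].
    apply: nUny; split => // m' Xm' nm'.
    have : (C m `&` C n) y by [].
    by rewrite (stable n m m') // => -[].
  move=> n m Xn Xm /eqP; rewrite neq_ltn => /orP[nm|mn]; first exact: disj.
  by rewrite setIC; exact: disj.
- by move=> n _; rewrite setDIK (setDUK (UC n)).
Qed.

Lemma infinite_subset_trace_constant (F : set T) (Y : set nat) :
  finite_set F -> infinite_set Y ->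
  exists2 Z, Z `<=` Y & infinite_set Z /\
    forall n m, Z n -> Z m -> C n `&` F = C m `&` F.
Proof.
move=> /(@finite_seqP {classic T})[s ->] Yoo.
pose g n := map_tuple (fun y => `[< C n y >]) (in_tuple s).
have [v vZ] := infinite_set_fiber g Yoo.
exists (Y `&` g @^-1` [set v]) => [n []//|]; split=> // n m [_ gn] [_ gm].
have Cnm : {in s, (fun y => `[< C n y >]) =1 (fun y => `[< C m y >])}.
  by apply/eq_in_map; exact: (congr1 val (etrans gn (esym gm))).
by apply/seteqP; split=> y [Cy sy]; split=> //; apply/(asbool_eq_equiv (Cnm y sy)).
Qed.

Hypothesis finC : forall n, finite_set (C n).

Lemma trace_constant_step (Z : set nat) : infinite_set Z ->
  exists x Z', [/\ Z x, Z' `<=` Z `&` [set n | (x < n)%N], infinite_set Z' &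
    forall n m, Z' n -> Z' m -> C n `&` C x = C m `&` C x].
Proof.
move=> Zoo; have [x Zx] := infinite_setN0 Zoo.
have [Z' Z'sub [Z'oo Z'C]] := infinite_subset_trace_constant (finC x)
  (infinite_setIl Zoo (cofinite_ge x.+1)).
by exists x, Z'.
Qed.

Lemma infinite_subset_stable_traces (Y : set nat) : infinite_set Y ->
  exists2 X, X `<=` Y /\ infinite_set X &
    forall n m m', X n -> X m -> X m' -> (n < m)%N -> (n < m')%N ->
      C m `&` C n = C m' `&` C n.
Proof.
move=> Yoo.
have /choice[step stepP] : forall Z : set nat, exists p : nat * set nat,
    infinite_set Z -> [/\ Z p.1, p.2 `<=` Z `&` [set n | (p.1 < n)%N],
      infinite_set p.2 & forall n m, p.2 n -> p.2 m -> C n `&` C p.1 = C m `&` C p.1].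
  move=> Z; have [Zoo|Zfin] := pselect (infinite_set Z); last by exists (0%N, Z) => /Zfin.
  by have [x [Z' ?]] := trace_constant_step Zoo; exists (x, Z').
pose Z k := iter k (fun Z => (step Z).2) Y.
pose x k := (step (Z k)).1.
have Zoo k : infinite_set (Z k) by elim: k => //= k /stepP[].
have /all_and4[Zx ZS _ ZC] := fun k => stepP _ (Zoo k).
have Zdecr j k : (j <= k)%N -> Z k `<=` Z j.
  elim: k => [|k IH]; first by rewrite leqn0 => /eqP->.
  rewrite leq_eqVlt => /orP[/eqP->//|/IH Zkj n /ZS[/Zkj]//].
have xZ j k : (j < k)%N -> Z j.+1 (x k) by move=> /Zdecr; apply; exact: Zx.
have x_incr k : (x k < x k.+1)%N by have /ZS[] := xZ k k.+1 (ltnSn k).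
exists (range x); first split.
- by move=> _ [k _ <-]; apply: (Zdecr 0%N k) => //; exact: Zx.
- exact/infinite_range_inj/incr_inj.
- move=> _ _ _ [j _ <-] [k _ <-] [k' _ <-].
  rewrite !incr_ltn_mono // => jk jk'.
  by apply: ZC; exact: xZ.
Qed.

End NiceDissection.

Lemma nice_dissection_infinite_subset (T : Type) (C : nat -> set T) (Y : set nat) :
  (forall n, finite_set (C n)) -> infinite_set Y ->
  exists X : set nat, [/\ X `<=` Y, infinite_set X &
    exists U D : nat -> set T, nice_dissection C X U D].
Proof.
move=> finC /(infinite_subset_stable_traces finC)[X [XY Xoo] stable].
by exists X; split => //; exact: nice_dissection_of_stable_traces.
Qed.

Lemma eventually_all_seq (A : eqType) (s : seq A) (P : A -> nat -> Prop) :
  (forall a, a \in s -> exists N, forall n, (N <= n)%N -> P a n) ->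
  exists N, forall n, (N <= n)%N -> forall a, a \in s -> P a n.
Proof.
elim: s => [|a s IH] ev; first by exists 0%N.
have [Na Pa] := ev a (mem_head a s).
have [Ns Ps] := IH (fun b bs => ev b (predU1r b a bs)).
exists (maxn Na Ns) => n; rewrite geq_max => /andP[an sn] b.
by rewrite in_cons => /orP[/eqP->|/Ps]; [exact: Pa|apply].
Qed.

Lemma bigcup_meets_eventually (T : Type) (I : set nat) (U : nat -> set T) (A : set T) :
  (forall n m, I n -> I m -> (n < m)%N -> U n `<=` U m) ->
  \bigcup_(n in I) U n `&` A !=set0 ->
  exists N, forall n, (N <= n)%N -> I n -> U n `&` A !=set0.
Proof.
move=> Umono [y [[n0 In0 Uy] Ay]]; exists n0 => n n0n In; exists y; split => //.
move: n0n; rewrite leq_eqVlt => /orP[/eqP<-//|n0n].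
exact: Umono n0 n In0 In n0n y Uy.
Qed.

Lemma dissection_bigcup_sub (T : Type) (X : set T) (I : set nat) (S U E : nat -> set T) :
  nice_dissection S I U E -> (forall n, I n -> S n `<=` X) ->
  \bigcup_(n in I) U n `<=` X.
Proof.
by move=> [_ _ SUE] SX x [n In Ux]; apply: (SX n In); rewrite (SUE n In).2; left.
Qed.

Section Vietoris.
Variables (K : topologicalType) (X : set K).

Definition vmem (p : bool * set K) (F : set K) : Prop :=
  if p.1 then F `<=` p.2 else F `&` p.2 !=set0.

Lemma vsubE p F : vsub X p F = (CL X F /\ vmem p F).
Proof. by case: p => -[]. Qed.

Lemma vbasicE s F : vbasic X s F <-> CL X F /\ forall p, p \in s -> vmem p F.
Proof.
split=> [[CLF sF]|[CLF sF]]; split=> // p ps.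
  by have := sF p ps; rewrite vsubE => -[].
by rewrite vsubE; split; [|exact: sF].
Qed.

Lemma vbasic_open s :
  (forall p, p \in s -> relopen X p.2) -> vietoris_open X (vbasic X s).
Proof. by move=> ro; split=> [F []|F sF] //; exists s; split. Qed.

Lemma relopenT : relopen X X.
Proof. by exists setT; rewrite setTI; split => //; exact: openT. Qed.

Lemma relopenI A B : relopen X A -> relopen X B -> relopen X (A `&` B).
Proof.
move=> [U [oU ->]] [V [oV ->]]; exists (U `&` V); split; first exact: openI.
by rewrite setIACA setIid.
Qed.

Lemma closed_CL S : S `<=` X -> S !=set0 -> closed S -> CL X S.
Proof. by move=> SX S0 /closure_id cS; split => //; rewrite -cS setIidl. Qed.

Lemma closure_CL A : A `<=` X -> A !=set0 -> CL X (closure A `&` X).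
Proof.
move=> AX [a Aa]; split => //.
  by exists a; split; [exact: subset_closure|exact: AX].
apply/seteqP; split=> x [cx Xx]; split => //; first exact: subset_closure.
by rewrite [closure A](closure_id _).1; [exact: closureS cx | exact: closed_closure].
Qed.

Lemma relopen_closure_meets A B : relopen X A -> B `<=` X ->
  (closure B `&` X) `&` A !=set0 -> B `&` A !=set0.
Proof.
move=> [V [oV ->]] BX [h [[cBh Xh] [Vh _]]].
have [y [By Vy]] := cBh V (open_nbhs_nbhs (conj oV Vh)).
by exists y; split => //; split => //; exact: BX.
Qed.

Definition vplus (s : seq (bool * set K)) := X `&` \big[setI/setT]_(p <- s | p.1) p.2.

Lemma relopen_vplus s : (forall p, p \in s -> relopen X p.2) -> relopen X (vplus s).
Proof.
move=> ro; rewrite /vplus big_seq_cond.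
apply: (big_ind (fun A => relopen X (X `&` A))).
- by rewrite setIT; exact: relopenT.
- by move=> A B XA XB; rewrite -[X in X `&` _]setIid setIACA; exact: relopenI.
- move=> p /andP[ps _]; have [V [oV ->]] := ro p ps.
  by rewrite setIC -setIA setIid; exists V.
Qed.

Lemma sub_vplus s F : F `<=` X -> (forall p, p \in s -> vmem p F) -> F `<=` vplus s.
Proof.
move=> FX sF x Fx; split; first exact: FX.
rewrite big_seq_cond; elim/big_rec: _ => // p A /andP[ps p1] Ax; split => //.
by have := sF p ps; rewrite /vmem p1; apply.
Qed.

Lemma vplus_sub (s : seq (bool * set K)) (p : bool * set K) :
  p \in s -> p.1 -> vplus s `<=` p.2.
Proof. by move=> ps p1 x [_]; rewrite (big_rem p ps) p1 => -[]. Qed.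

Lemma dense_relopen_meets (D A : set K) : dense D -> D `<=` X ->
  relopen X A -> A !=set0 -> A `&` D !=set0.
Proof.
move=> dD DX [V [oV ->]] [x [Vx Xx]].
have [d [Vd Dd]] := dD V (ex_intro _ x Vx) oV.
by exists d; split => //; split => //; exact: DX.
Qed.

Lemma vbasic_dense_finite (D : set K) s F : hausdorff_space K -> dense D ->
  D `<=` X -> (forall p, p \in s -> relopen X p.2) -> vbasic X s F ->
  exists S, [/\ finite_set S, S !=set0, S `<=` D & vbasic X s S].
Proof.
move=> hK dD DX ro /vbasicE[[FX [x0 Fx0] _] sF].
have FP := sub_vplus FX sF.
have hit A : relopen X A -> F `&` A !=set0 -> exists2 d, D d & (vplus s `&` A) d.
  move=> roA [x [Fx Ax]].
  have [d [PAd Dd]] := dense_relopen_meets dD DX (relopenI (relopen_vplus ro) roA)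
    (ex_intro _ x (conj (FP x Fx) Ax)).
  by exists d.
have [d0 Dd0 [Pd0 _]] := hit X relopenT (ex_intro _ x0 (conj Fx0 (FX x0 Fx0))).
have /choice[d dP] : forall p : bool * set K, exists x,
    p \in s -> [/\ D x, vplus s x & ~~ p.1 -> p.2 x].
  move=> p; have [ps|] := pselect (p \in s); last by exists d0.
  have [p1|p1] := boolP p.1; first by exists d0.
  have := sF p ps; rewrite /vmem (negbTE p1) => /(hit _ (ro p ps))[x Dx [Px px]].
  by exists x.
pose S := d0 |` d @` [set` s].
have SDP : S `<=` D `&` vplus s.
  by move=> _ [->|[p ps <-]] //; have [] := dP p ps.
have finS : finite_set S.
  by rewrite finite_setU; split; [exact: finite_set1|exact/finite_image/finite_seq].
have S0 : S !=set0 by exists d0; left.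
exists S; split => //; first by move=> x /SDP[].
apply/vbasicE; split.
  apply: closed_CL => //; first by move=> x /SDP[/DX].
  exact: (@accessible_finite_set_closed K).1 (hausdorff_accessible hK) _ finS.
move=> p ps; rewrite /vmem; case: ifP => p1.
  by move=> x /SDP[_ /(vplus_sub ps p1)].
have [_ _ pd] := dP p ps.
by exists (d p); split; [right; exists p|apply: pd; rewrite p1].
Qed.

Lemma vietoris_open_dense_finite (D : set K) W F : hausdorff_space K -> dense D ->
  D `<=` X -> vietoris_open X W -> W F ->
  exists S, [/\ finite_set S, S !=set0, S `<=` D & W S].
Proof.
move=> hK dD DX [_ Wbasic] WF; have [s [ro sF sW]] := Wbasic F WF.
have [S [finS S0 SD sS]] := vbasic_dense_finite hK dD DX ro sF.
by exists S; split => //; exact: sW.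
Qed.

(* Accumulation along [I], tested on basic Vietoris sets only; unlike
   [vietoris_acc_point], [G] may be empty and the [E n] need not be in CL(X). *)
Definition vietoris_cluster (I : set nat) (E : nat -> set K) (G : set K) : Prop :=
  forall s : seq (bool * set K), (forall p, p \in s -> relopen X p.2) ->
    (forall p, p \in s -> vmem p G) ->
    forall m, exists n, [/\ (m <= n)%N, I n & forall p, p \in s -> vmem p (E n)].

Lemma vietoris_cluster_open I E G : CL X G -> (forall n, I n -> CL X (E n)) ->
  vietoris_cluster I E G -> forall W, vietoris_open X W -> W G ->
  forall m, exists n, [/\ (m <= n)%N, I n & W (E n)].
Proof.
move=> CLG CLE clG W [_ Wbasic] WG m.
have [s [ro /vbasicE[_ sG] sW]] := Wbasic G WG.
have [n [mn In sE]] := clG s ro sG m.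
by exists n; split => //; apply/sW/vbasicE; split; [exact: CLE|].
Qed.

Lemma acc_point_cluster I E G (e : nat -> nat) :
  (forall k, (e k < e k.+1)%N) -> (forall k, I (e k)) ->
  vietoris_acc_point X (E \o e) G -> vietoris_cluster I E G.
Proof.
move=> e_incr Ie [CLG accG] s ro sG m.
have sGb : vbasic X s G by apply/vbasicE.
have [k mk /vbasicE[_ sE]] := accG _ (vbasic_open ro) sGb m.
by exists (e k); split => //; exact: leq_trans mk (incr_ge_id e_incr k).
Qed.

Lemma cluster_set0 I E : infinite_set (I `\` [set n | E n !=set0]) ->
  vietoris_cluster I E set0.
Proof.
move=> Ioo s _ s0 m; have [n mn [In En]] := infinite_set_ge m Ioo.
exists n; split => // p ps; have := s0 p ps; rewrite /vmem; case: ifP => _.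
  by move=> _ x Ex; exfalso; apply: En; exists x.
by move=> [x [[]]].
Qed.

Lemma nice_dissection_cluster I (S U E : nat -> set K) G :
  nice_dissection S I U E -> (forall n, I n -> S n `<=` X) -> G `<=` X ->
  vietoris_cluster I E G ->
  vietoris_cluster I S (closure (\bigcup_(n in I) U n `|` G) `&` X).
Proof.
move=> nd SX GX clE s ro sH m; have [Umono _ SUE] := nd.
set Uoo := \bigcup_(n in I) U n.
have UGX : Uoo `|` G `<=` X by move=> x [/(dissection_bigcup_sub nd SX)|/GX].
have UG_H : Uoo `|` G `<=` closure (Uoo `|` G) `&` X.
  by move=> x UGx; split; [exact: subset_closure|exact: UGX].
have [N UN] : exists N, forall n, (N <= n)%N -> forall p, p \in s ->
    I n -> Uoo `&` p.2 !=set0 -> U n `&` p.2 !=set0.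
  apply: eventually_all_seq => p _.
  have [/(bigcup_meets_eventually Umono)[N UN]|noU] := pselect (Uoo `&` p.2 !=set0).
    by exists N => n Nn In _; exact: UN.
  by exists 0%N => n _ _ /noU.
(* The remainders [E n] are only asked to follow [G] on the constraints [G] meets. *)
pose sG := [seq p <- s | `[< vmem p G >]].
have [n [mNn In sE]] : exists n, [/\ (maxn m N <= n)%N, I n &
    forall p, p \in sG -> vmem p (E n)].
  apply: clE => p; rewrite mem_filter => /andP[/asboolP Gp ps] //; exact: ro.
move: mNn; rewrite geq_max => /andP[mn Nn].
exists n; split => // p ps.
have Ep : vmem p G -> vmem p (E n).
  by move=> Gp; apply: sE; rewrite mem_filter ps andbT; exact/asboolP.
move: (sH p ps) Ep; rewrite /vmem (SUE n In).2; case: ifP => _.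
  move=> Hp Ep x [Ux|Ex]; first by apply/Hp/UG_H; left; exists n.
  by apply: (Ep (subset_trans (fun y Gy => UG_H y (or_intror Gy)) Hp)).
move=> /(relopen_closure_meets (ro p ps) UGX)[x [[Ux|Gx] px]] Ep.
  have [y [Uy py]] := UN n Nn p ps In (ex_intro _ x (conj Ux px)).
  by exists y; split => //; left.
have [y [Ey py]] := Ep (ex_intro _ x (conj Gx px)).
by exists y; split => //; right.
Qed.

End Vietoris.

Section Pseudocompact.
Variables (K : topologicalType) (D X : set K).
Hypotheses (hK : hausdorff_space K) (dD : dense D) (DX : D `<=` X).
Hypothesis acc : forall S : nat -> set K,
  (forall n, [/\ finite_set (S n), S n !=set0 & S n `<=` D]) ->
  (forall n m, n <> m -> S n `&` S m = set0) -> exists G, vietoris_acc_point X S G.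

Lemma dissection_cluster_point (I : set nat) (S U E : nat -> set K) :
  infinite_set I -> nice_dissection S I U E ->
  (forall n, [/\ finite_set (S n), S n !=set0 & S n `<=` D]) ->
  exists G, [/\ G `<=` X, vietoris_cluster X I E G &
    (\bigcup_(n in I) U n `|` G) !=set0].
Proof.
move=> Ioo nd SP; have [_ Edisj SUE] := nd.
have ES n : I n -> E n `<=` S n by move=> In x Ex; rewrite (SUE n In).2; right.
have [Joo|/contrapT Jfin] := pselect (infinite_set (I `&` [set n | E n !=set0])).
  have [e [e_incr eJ]] := infinite_set_incr_enum Joo.
  have [k|k l kl|G accG] := @acc (E \o e).
  - have [Ie Ee] := eJ k; have [Sfin _ SD] := SP (e k).
    by split => //; [exact: sub_finite_set (ES _ Ie) Sfin|move=> x /(ES _ Ie)/SD].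
  - by apply: Edisj; [exact: (eJ k).1|exact: (eJ l).1|move/(incr_inj e_incr)].
  have [[GX [g Gg] _] _] := accG.
  exists G; split => //; last by exists g; right.
  exact: acc_point_cluster e_incr (fun k => (eJ k).1) accG.
have Ioo' : infinite_set (I `\` [set n | E n !=set0]).
  apply: sub_infinite_set (infinite_setD Ioo Jfin) => n [In nJ].
  by split => // En; apply: nJ.
exists set0; split => //; first exact: cluster_set0.
have [n _ [In En]] := infinite_set_ge 0 Ioo'.
have [_ [x Sx] _] := SP n; move: Sx; rewrite (SUE n In).2 => -[Ux|Ex].
  by exists x; left; exists n.
by exfalso; apply: En; exists x.
Qed.

Local Open Scope ring_scope.

Lemma unbounded_finite_witness (R : realType) (f : set K -> R) :
  vietoris_continuous X f -> ~ (exists M : R, forall F, CL X F -> `|f F| <= M) ->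
  forall r : R, exists S, [/\ finite_set S, S !=set0, S `<=` D, CL X S & r < `|f S|].
Proof.
move=> fc nb r.
have [F [CLF rF]] : exists F, CL X F /\ r < `|f F|.
  apply: contrapT => nF; apply: nb; exists r => F CLF.
  by rewrite leNgt; apply/negP => rF; apply: nF; exists F.
pose O := [set x : R | r < x] `|` [set x : R | x < - r].
have Onorm x : O x <-> r < `|x|.
  by rewrite ltr_normr ltrNr; split => [[]->|/orP[]]; rewrite ?orbT //; [left|right].
have oO : open O by apply: openU; [exact: open_gt|exact: open_lt].
have [S [Sfin S0 SD [CLS /Onorm rS]]] :=
  vietoris_open_dense_finite hK dD DX (fc O oO) (conj CLF (proj2 (Onorm _) rF)).
by exists S.
Qed.

Lemma CL_pseudocompact_of_acc : CL_pseudocompact X.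
Proof.
move=> R f fc; apply: contrapT => nb.
have /choice[S /all_and5[Sfin S0 SD CLS Sf]] :=
  fun n : nat => unbounded_finite_witness fc nb n%:R.
have [I [_ Ioo [U [E nd]]]] := nice_dissection_infinite_subset Sfin infinite_nat.
have [G [GX clE UG0]] :=
  dissection_cluster_point Ioo nd (fun n => And3 (Sfin n) (S0 n) (SD n)).
have SX n : I n -> S n `<=` X by move=> _; case: (CLS n).
have UGX : \bigcup_(n in I) U n `|` G `<=` X.
  by move=> x [/(dissection_bigcup_sub nd SX)|/GX].
pose H := closure (\bigcup_(n in I) U n `|` G) `&` X.
have CLH : CL X H := closure_CL UGX UG0.
have clS := nice_dissection_cluster nd SX GX clE.
pose m := Num.Def.archi_bound (`|f H| + 1).
have Hm : `|f H| + 1 < m%:R by apply: archi_boundP; rewrite addr_ge0.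
have WH : [set F | CL X F /\ ball (f H) 1 (f F)] H by split => //; exact: ballxx.
have [n [mn _ [_]]] :=
  vietoris_cluster_open CLH (fun n _ => CLS n) clS (fc _ (ball_open _ _)) WH m.
rewrite -ball_normE /= => HSn.
have := ler_normB (f H) (f H - f (S n)); rewrite opprB addrC subrK.
have := Sf n; have : m%:R <= n%:R :> R by rewrite ler_nat.
lra.
Qed.

End Pseudocompact.

Theorem lemma4p4 :
  (forall (T : Type) (C : nat -> set T) (Y : set nat),
      (forall n, finite_set (C n)) -> infinite_set Y ->
      exists X : set nat, [/\ X `<=` Y, infinite_set X &
        exists U Dd : nat -> set T, nice_dissection C X U Dd])
  /\
  (forall (K : topologicalType) (D X : set K),
      compactification_of_discrete D -> D `<=` X -> X `<=` [set: K] ->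
      (forall S : nat -> set K,
          (forall n, [/\ finite_set (S n), S n !=set0 & S n `<=` D]) ->
          (forall n m, n <> m -> S n `&` S m = set0) ->
          exists G, vietoris_acc_point X S G) ->
      CL_pseudocompact X).
Proof.
split; first exact: nice_dissection_infinite_subset.
move=> K D X [hK _ dD _] DX _; exact: CL_pseudocompact_of_acc.
Qed.
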